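(* Let $(\mathcal{A},\varphi)$ be a tracial noncommutative probability space with universal enveloping traffic space $(\mathcal{G}(\mathcal{A}),\psi)$. For any graph monomial $t\in\mathcal{G}(\mathcal{A})$ there exists a partition $\pi$ of its vertex set such that the quotient $t^\pi$ is a quasi-cactus and $t^\pi\equiv t\pmod\psi$.
   Context: $(\mathcal{A},\varphi)$: unital complex algebra with unital tracial linear functional; free cumulants $\kappa_n$ determined by $\varphi(a_1\cdots a_n)=\sum_{\pi\in NC(n)}\prod_{B\in\pi}\kappa_{|B|}[(a_i)_{i\in B}]$. A graph monomial in $\mathcal{A}$ is a finite connected directed multigraph (loops, parallel edges allowed) with distinguished, not necessarily distinct, vertices $v_{\mathrm{in}},v_{\mathrm{out}}$ and edge labels in $\mathcal{A}$, up to isomorphism; $t^\pi$ identifies vertices in each block of $\pi$ (input/output become their images). $\iota(a)$: two vertices, one edge from $v_{\mathrm{in}}$ to $v_{\mathrm{out}}$ labelled $a$. Substitution $Z_g(t_1,\dots,t_K)$ for a connected bi-rooted multidigraph $g$ with ordered edges $e_1,\dots,e_K$ replaces each $e_i$ by a copy of $t_i$, identifying $\mathrm{src}(e_i)$ with the input and $\mathrm{tgt}(e_i)$ with the output of $t_i$; the product $t_1t_2$ identifies the input of $t_1$ with the output of $t_2$. $\mathcal{G}(\mathcal{A})$ is the span of graph monomials modulo the span of $Z_g(\iota(a_1),\dots,\iota(a_K))-Z_g(P(\iota(b_1),\dots,\iota(b_n)),\iota(a_2),\dots)$ (any edge position) for $a_1=P(b_1,\dots,b_n)$, $P$ a noncommutative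 polynomial. A test graph is a finite connected directed multigraph with labels in $\mathcal{A}$. Cactus: connected multigraph with each edge in exactly one simple cycle (loops, pairs of parallel edges count); pads = these cycles; oriented cactus: every pad directed. $\tau^0_\varphi[T]=\prod_{C\in\mathrm{Pads}(T)}\kappa_{n_C}[\gamma(e_1),\dots,\gamma(e_{n_C})]$ for oriented cacti (edges listed with $\mathrm{src}(e_i)=\mathrm{tgt}(e_{i+1})$, indices mod $n_C$), else $0$; $\tau_\varphi[T]=\sum_\pi\tau^0_\varphi[T^\pi]$ over partitions of the vertex set. $\psi(t)=\tau_\varphi[\tilde\Delta(t)]$ where $\tilde\Delta(t)$ identifies input and output and forgets roots. $s\equiv t\pmod\psi$ means $\psi((s-t)u)=0$ for all $u$. A quasi-cactus is a multigraph in which $\lambda(v,w)\in\{1,2\}$ for all distinct vertices $v,w$, where $\lambda(v,w)$ is the minimal number of edges whose deletion disconnects $v$ and $w$ (equivalently every edge belongs to at most one simple cycle). *)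

From HB Require Import structures.
From mathcomp Require Import all_boot all_order all_algebra.
From mathcomp Require Import complex Rstruct.
Set Implicit Arguments. Unset Strict Implicit. Unset Printing Implicit Defensive.
Import Order.TTheory GRing.Theory Num.Theory.
Local Open Scope ring_scope.

Definition complexC : numClosedFieldType := (Rdefinitions.R)[i].

Section Traffic.
Variables (K : fieldType) (A : algType K) (phi : A -> K).

Definition noncrossing n (P : {set {set 'I_n}}) : bool :=
  [forall a : 'I_n, forall b : 'I_n, forall c : 'I_n, forall d : 'I_n,
     [&& (a < b)%N, (b < c)%N, (c < d)%N, pblock P a == pblock P c
       & pblock P b == pblock P d] ==> (pblock P a == pblock P b)].

Definition subword (s : seq A) (B : {set 'I_(size s)}) : seq A :=
  [seq nth 0 s (val i) | i <- enum B].

(* kappa_n defined recursively by the moment-cumulant formula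
   phi(a_1...a_n) = sum_{pi in NC(n)} prod_{B in pi} kappa_|B|[(a_i)_{i in B}] ;
   the fuel argument is any bound >= size s. *)
Fixpoint kappa_fuel (fuel : nat) (s : seq A) : K :=
  match fuel with
  | 0 => 0
  | k.+1 =>
      phi (\prod_(x <- s) x)
      - \sum_(P : {set {set 'I_(size s)}} |
                [&& partition P [set: 'I_(size s)], noncrossing P
                  & P != [set [set: 'I_(size s)]]])
          \prod_(B in P) kappa_fuel k (subword B)
  end.

Definition kappa (s : seq A) : K := kappa_fuel (size s) s.

(* A (directed multi)graph with vertex set {0,..,tg_n-1}; each edge is a
   triple (source, target, label); edges are indexed by their position. *)
Record testgraph := TG { tg_n : nat; tg_e : seq (nat * nat * A) }.

Definition tg_wf (T : testgraph) : bool :=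
  all (fun e => (e.1.1 < tg_n T)%N && (e.1.2 < tg_n T)%N) (tg_e T).

Definition edge_t (T : testgraph) := 'I_(size (tg_e T)).
Definition esrc T (i : edge_t T) : nat := (nth (0%N, 0%N, 0) (tg_e T) i).1.1.
Definition etgt T (i : edge_t T) : nat := (nth (0%N, 0%N, 0) (tg_e T) i).1.2.
Definition elab T (i : edge_t T) : A := (nth (0%N, 0%N, 0) (tg_e T) i).2.

Definition vert_t (T : testgraph) := 'I_(tg_n T).

Definition adjS T (S : {set edge_t T}) : rel (vert_t T) :=
  fun x y => [exists i in S, ((esrc i == x) && (etgt i == y))
                          || ((esrc i == y) && (etgt i == x))].

Definition connected (T : testgraph) : bool :=
  [forall x : vert_t T, forall y : vert_t T, connect (adjS [set: edge_t T]) x y].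

Definition blk n (P : {set {set 'I_n}}) (x : nat) : nat :=
  if insub x is Some v then index (pblock P v) (enum P) else 0%N.

Definition quot (T : testgraph) (P : {set {set vert_t T}}) : testgraph :=
  TG #|P| [seq (blk P e.1.1, blk P e.1.2, e.2) | e <- tg_e T].

Definition glue_part (T : testgraph) (a b : nat) : {set {set vert_t T}} :=
  preim_partition (fun v : vert_t T => if val v == b then a else val v)
                  [set: vert_t T].
Definition glue (T : testgraph) (a b : nat) : testgraph := quot (glue_part T a b).

Definition indeg T (S : {set edge_t T}) (v : vert_t T) : nat :=
  #|[set i in S | etgt i == v]|.
Definition outdeg T (S : {set edge_t T}) (v : vert_t T) : nat :=
  #|[set i in S | esrc i == v]|.
Definition touched T (S : {set edge_t T}) (v : vert_t T) : bool :=
  [exists i in S, (esrc i == v) || (etgt i == v)].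

(* simple cycle = nonempty edge set forming a connected 2-regular
   subgraph (a loop gives degree 2; two parallel edges form a cycle) *)
Definition simple_cycle T (S : {set edge_t T}) : bool :=
  [&& S != set0,
      [forall v : vert_t T, touched S v ==> (indeg S v + outdeg S v == 2)%N]
    & [forall v : vert_t T, forall w : vert_t T,
         (touched S v && touched S w) ==> connect (adjS S) v w]].

Definition is_cactus (T : testgraph) : bool :=
  tg_wf T && connected T &&
  [forall i : edge_t T, #|[set S : {set edge_t T} | simple_cycle S & i \in S]| == 1%N].

Definition pads (T : testgraph) : {set {set edge_t T}} :=
  [set S : {set edge_t T} | simple_cycle S].

Definition oriented_cactus (T : testgraph) : bool :=
  is_cactus T &&
  [forall S in pads T, forall v : vert_t T,
     touched S v ==> ((indeg S v == 1%N) && (outdeg S v == 1%N))].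

(* edges of a directed pad listed e_1,...,e_k with src(e_i) = tgt(e_{i+1}) *)
Definition pad_next T (S : {set edge_t T}) (e : edge_t T) : edge_t T :=
  odflt e [pick f in S | etgt f == esrc e].
Definition pad_labels T (S : {set edge_t T}) : seq A :=
  if enum S is e0 :: _ then [seq elab e | e <- traject (pad_next S) e0 #|S|]
  else [::].

Definition tau0 (T : testgraph) : K :=
  if oriented_cactus T then \prod_(S in pads T) kappa (pad_labels S) else 0.

Definition tau (T : testgraph) : K :=
  \sum_(P : {set {set vert_t T}} | partition P [set: vert_t T]) tau0 (quot P).

Record gmono := GM { gm_g : testgraph; gm_in : nat; gm_out : nat }.

Definition gm_wf (t : gmono) : bool :=
  [&& tg_wf (gm_g t), (gm_in t < tg_n (gm_g t))%N, (gm_out t < tg_n (gm_g t))%N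
    & connected (gm_g t)].

Definition gm_quot (t : gmono) (P : {set {set vert_t (gm_g t)}}) : gmono :=
  GM (quot P) (blk P (gm_in t)) (blk P (gm_out t)).

(* product t u : the input of t is identified with the output of u;
   the input of t u is the input of u, its output is the output of t *)
Definition gm_mul (t u : gmono) : gmono :=
  let n1 := tg_n (gm_g t) in
  let T := TG (n1 + tg_n (gm_g u))
              (tg_e (gm_g t) ++
               [seq (n1 + e.1.1, n1 + e.1.2, e.2)%N | e <- tg_e (gm_g u)]) in
  let P := glue_part T (gm_in t) (n1 + gm_out u)%N in
  GM (quot P) (blk P (n1 + gm_in u)%N) (blk P (gm_out t)).

Definition delta (t : gmono) : testgraph := glue (gm_g t) (gm_in t) (gm_out t).

Definition psi (t : gmono) : K := tau (delta t).


(* s = t (mod psi), tested against all graph monomials u (which span G(A)) *)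
Definition eq_mod_psi (s t : gmono) : Prop :=
  forall u : gmono, gm_wf u -> psi (gm_mul s u) = psi (gm_mul t u).

End Traffic.
Arguments gm_quot {K A} t P.

Section QC.
Variables (K : fieldType) (A : algType K).

Definition edge_conn (T : testgraph A) (v w : vert_t T) : nat :=
  \big[minn/(size (tg_e T)).+1]_(S : {set edge_t T} |
        ~~ connect (adjS (~: S)) v w) #|S|.

Definition quasi_cactus (T : testgraph A) : bool :=
  [forall v : vert_t T, forall w : vert_t T,
     (v != w) ==> (edge_conn v w \in [:: 1%N; 2%N])].
End QC.

(* Call two vertices 3-edge-connected when no two edges separate them. This is an
   equivalence relation; let pi be its partition. Two distinct vertices of t^pi are
   still separated by the images of two edges of t, and t^pi stays connected, so t^pi
   is a quasi-cactus.
   In a cactus two distinct vertices are always separated by two edges, so a quotient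
   of a graph can only be a cactus if it merges every 3-edge-connected pair, and pairs
   of t remain 3-edge-connected in the disjoint union of t and u. As tau0 vanishes off
   cacti, the partitions contributing to psi(t u) = sum_P tau0(Delta(t u)^P) are coarser
   than pi on t, and they are exactly those contributing to psi(t^pi u). Nothing about
   phi is used. *)

From HB Require Import structures.
From mathcomp Require Import all_boot all_order all_algebra zify.
Set Implicit Arguments. Unset Strict Implicit. Unset Printing Implicit Defensive.

Section PartitionBlocks.
Variable n : nat.
Implicit Types (P Q : {set {set 'I_n}}) (x y : 'I_n).

Lemma pblock_memT P x : partition P setT -> pblock P x \in P.
Proof. by case/and3P=> /eqP covP _ _; apply: pblock_mem; rewrite covP inE. Qed.

Lemma eq_pblockT P x y : partition P setT ->
  (pblock P x == pblock P y) = (y \in pblock P x).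
Proof. by case/and3P=> /eqP covP triP _; apply: eq_pblock; rewrite ?covP ?inE. Qed.

Lemma blkE P x : blk P x = index (pblock P x) (enum P).
Proof. by rewrite /blk valK. Qed.

Lemma blk_ltn P m : partition P setT -> m < n -> blk P m < #|P|.
Proof.
move=> partP ltmn; rewrite -[m]/(val (Ordinal ltmn)) blkE cardE index_mem mem_enum.
exact: pblock_memT.
Qed.

Lemma eq_blk P x y : partition P setT -> (blk P x == blk P y) = (pblock P x == pblock P y).
Proof.
move=> partP; rewrite !blkE; apply/eqP/eqP => [|-> //].
by move/(congr1 (nth set0 (enum P))); rewrite !nth_index // mem_enum pblock_memT.
Qed.

Lemma blk_surj P j : partition P setT -> j < #|P| -> exists x, blk P x = j.
Proof.
move=> partP ltjP; set B := nth set0 (enum P) j.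
have BP : B \in P by rewrite -mem_enum mem_nth // -cardE.
have /set0Pn[x xB] : B != set0 by apply: partition_neq0 partP BP.
exists x; rewrite blkE (def_pblock _ BP xB); last by case/and3P: partP.
by rewrite index_uniq ?enum_uniq // -cardE.
Qed.

Lemma partition_eq_pblock P Q : partition P setT -> partition Q setT ->
  (forall x y, (pblock P x == pblock P y) = (pblock Q x == pblock Q y)) -> P = Q.
Proof.
move=> partP partQ samePQ.
rewrite -(preim_partition_pblock partP) -(preim_partition_pblock partQ).
by apply: eq_imset => x; apply/setP => y; rewrite !inE samePQ.
Qed.

Lemma pblock_preim (T : eqType) (f : 'I_n -> T) x y :
  (pblock (preim_partition f setT) x == pblock (preim_partition f setT) y) = (f x == f y).
Proof.
rewrite eq_pblockT ?preim_partitionP // pblock_equivalence_partition ?inE //.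
by split=> // /eqP ->.
Qed.

End PartitionBlocks.

Lemma homo_connect (T T' : finType) (f : T -> T') (e : rel T) (e' : rel T') :
  {homo f : x y / e x y >-> e' x y} ->
  forall x y, connect e x y -> connect e' (f x) (f y).
Proof.
move=> fe x y /connectP[p ep ->]; apply/connectP; exists (map f p).
  exact: homo_path ep.
by rewrite last_map.
Qed.

Lemma eq_traject (T : Type) (f g : T -> T) : f =1 g -> traject f =2 traject g.
Proof. by move=> eq_fg x k; elim: k x => //= k IHk x; rewrite eq_fg IHk. Qed.

Section EndpointGraphs.
Variables (K : fieldType) (A : algType K) (phi : A -> K).

(* The ingredients of [tau0] for a graph with edge set 'I_m given by endpoint and label
   functions: unlike [edge_t T], this edge type is shared by all graphs with m edges,
   which is what relabelling vertices requires. *)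
Section EndpointDefinitions.
Variables (n m : nat) (src tgt : 'I_m -> nat) (lab : 'I_m -> A).

Definition ep_adj (S : {set 'I_m}) : rel 'I_n := fun x y =>
  [exists i in S, ((src i == x) && (tgt i == y)) || ((src i == y) && (tgt i == x))].
Definition ep_wf := [forall i, (src i < n) && (tgt i < n)].
Definition ep_connected :=
  [forall x : 'I_n, forall y : 'I_n, connect (ep_adj [set: 'I_m]) x y].
Definition ep_indeg (S : {set 'I_m}) (v : 'I_n) := #|[set i in S | tgt i == v]|.
Definition ep_outdeg (S : {set 'I_m}) (v : 'I_n) := #|[set i in S | src i == v]|.
Definition ep_touched (S : {set 'I_m}) (v : 'I_n) :=
  [exists i in S, (src i == v) || (tgt i == v)].
Definition ep_simple_cycle (S : {set 'I_m}) :=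
  [&& S != set0,
      [forall v : 'I_n, ep_touched S v ==> (ep_indeg S v + ep_outdeg S v == 2)%N]
    & [forall v : 'I_n, forall w : 'I_n,
         (ep_touched S v && ep_touched S w) ==> connect (ep_adj S) v w]].
Definition ep_cactus := ep_wf && ep_connected &&
  [forall i : 'I_m, #|[set S : {set 'I_m} | ep_simple_cycle S & i \in S]| == 1%N].
Definition ep_pads := [set S : {set 'I_m} | ep_simple_cycle S].
Definition ep_oriented := ep_cactus &&
  [forall S in ep_pads, forall v : 'I_n,
     ep_touched S v ==> ((ep_indeg S v == 1%N) && (ep_outdeg S v == 1%N))].
Definition ep_pad_next (S : {set 'I_m}) (e : 'I_m) : 'I_m :=
  odflt e [pick f in S | tgt f == src e].
Definition ep_pad_labels (S : {set 'I_m}) : seq A :=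
  if enum S is e0 :: _ then [seq lab e | e <- traject (ep_pad_next S) e0 #|S|]
  else [::].
Definition ep_tau0 : K :=
  if ep_oriented then (\prod_(S in ep_pads) kappa phi (ep_pad_labels S))%R else 0%R.

End EndpointDefinitions.

Lemma tg_wfE (T : testgraph A) : tg_wf T = ep_wf (tg_n T) (@esrc _ _ T) (@etgt _ _ T).
Proof.
apply/(all_nthP (0%N, 0%N, 0%R))/forallP => [wfT i|wfT j ltj]; first exact: wfT.
exact: (wfT (Ordinal ltj)).
Qed.

Lemma tau0E (T : testgraph A) :
  tau0 phi T = ep_tau0 (tg_n T) (@esrc _ _ T) (@etgt _ _ T) (@elab _ _ T).
Proof. by rewrite /tau0 /oriented_cactus /is_cactus tg_wfE. Qed.

Section Relabel.
Variables (n n' m : nat) (src tgt src' tgt' : 'I_m -> nat) (lab lab' : 'I_m -> A).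
Variable sigma : 'I_n -> 'I_n'.
Hypotheses (sigma_bij : bijective sigma)
  (src_sigma : forall i v, (src' i == sigma v) = (src i == v))
  (tgt_sigma : forall i v, (tgt' i == sigma v) = (tgt i == v))
  (lab_eq : lab' =1 lab).

Let forall_sigma (P : pred 'I_n') : [forall w, P w] = [forall v, P (sigma v)].
Proof.
case: sigma_bij => sigma' _ sigmaK'.
by apply/forallP/forallP => Pv w //; rewrite -(sigmaK' w).
Qed.

Let ep_adj_sigma S x y : ep_adj src' tgt' S (sigma x) (sigma y) = ep_adj src tgt S x y.
Proof. by apply: eq_existsb => i; rewrite !src_sigma !tgt_sigma. Qed.

Let connect_sigma S x y :
  connect (ep_adj src' tgt' S) (sigma x) (sigma y) = connect (ep_adj src tgt S) x y.
Proof.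
case: sigma_bij => sigma' sigmaK sigmaK'.
apply/idP/idP; last by apply: homo_connect => {}x {}y; rewrite ep_adj_sigma.
rewrite -{2}(sigmaK x) -{2}(sigmaK y); apply: homo_connect => {}x {}y.
by rewrite -ep_adj_sigma !sigmaK'.
Qed.

Let ep_wf_sigma : ep_wf n' src' tgt' = ep_wf n src tgt.
Proof.
case: sigma_bij => sigma' sigmaK sigmaK'.
have bound (f f' : 'I_m -> nat) : (forall i v, (f' i == sigma v) = (f i == v)) ->
    forall i, (f' i < n') = (f i < n).
  move=> f_sigma i; apply/idP/idP => [ltn'|ltn].
    by have := f_sigma i (sigma' (Ordinal ltn')); rewrite sigmaK' eqxx => /esym/eqP ->.
  by have := f_sigma i (Ordinal ltn); rewrite eqxx => /eqP ->.
by apply: eq_forallb => i; rewrite (bound _ _ src_sigma) (bound _ _ tgt_sigma).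
Qed.

Let ep_touched_sigma S v : ep_touched src' tgt' S (sigma v) = ep_touched src tgt S v.
Proof. by apply: eq_existsb => i; rewrite src_sigma tgt_sigma. Qed.
Let ep_indeg_sigma S v : ep_indeg tgt' S (sigma v) = ep_indeg tgt S v.
Proof. by apply: eq_card => i; rewrite !inE tgt_sigma. Qed.
Let ep_outdeg_sigma S v : ep_outdeg src' S (sigma v) = ep_outdeg src S v.
Proof. by apply: eq_card => i; rewrite !inE src_sigma. Qed.

Let ep_simple_cycle_sigma S : ep_simple_cycle n' src' tgt' S = ep_simple_cycle n src tgt S.
Proof.
rewrite /ep_simple_cycle !forall_sigma; congr [&& _, _ & _].
  by apply: eq_forallb => v; rewrite ep_touched_sigma ep_indeg_sigma ep_outdeg_sigma.
apply: eq_forallb => v; rewrite forall_sigma; apply: eq_forallb => w.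
by rewrite !ep_touched_sigma connect_sigma.
Qed.

Let ep_pads_sigma : ep_pads n' src' tgt' = ep_pads n src tgt.
Proof. by apply/setP => S; rewrite !inE ep_simple_cycle_sigma. Qed.

Let ep_oriented_sigma : ep_oriented n' src' tgt' = ep_oriented n src tgt.
Proof.
rewrite /ep_oriented /ep_cactus ep_wf_sigma ep_pads_sigma /ep_connected forall_sigma.
congr (_ && _ && _ && _).
- apply: eq_forallb => v; rewrite forall_sigma.
  by apply: eq_forallb => w; rewrite connect_sigma.
- apply: eq_forallb => i; congr (_ == _); apply: eq_card => S.
  by rewrite !inE ep_simple_cycle_sigma.
apply: eq_forallb => S; congr (_ ==> _); rewrite forall_sigma.
by apply: eq_forallb => v; rewrite ep_touched_sigma ep_indeg_sigma ep_outdeg_sigma.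
Qed.

Let ep_pad_next_sigma S : ep_wf n src tgt -> ep_pad_next src' tgt' S =1 ep_pad_next src tgt S.
Proof.
move=> /forallP wf e; congr odflt; apply: eq_pick => f /=.
have /andP[ltn _] := wf e.
by have := src_sigma e (Ordinal ltn); rewrite eqxx => /eqP ->; rewrite tgt_sigma.
Qed.

Lemma ep_tau0_relabel : ep_tau0 n' src' tgt' lab' = ep_tau0 n src tgt lab.
Proof.
rewrite /ep_tau0 ep_oriented_sigma ep_pads_sigma; case: ifP => // orientedT.
have wf : ep_wf n src tgt by case/andP: orientedT => /andP[/andP[]].
apply: eq_bigr => S _; congr (kappa phi _); rewrite /ep_pad_labels.
case: (enum S) => // e0 _.
by rewrite (eq_traject (ep_pad_next_sigma S wf)); apply: eq_map.
Qed.

End Relabel.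

Lemma ep_tau0_cast n m m' (e : m = m') src tgt lab src' tgt' lab' :
  (forall i, src' (cast_ord e i) = src i) -> (forall i, tgt' (cast_ord e i) = tgt i) ->
  (forall i, lab' (cast_ord e i) = lab i) ->
  ep_tau0 n src' tgt' lab' = ep_tau0 n src tgt lab.
Proof.
case: m' / e src' tgt' lab' => src' tgt' lab' src_eq tgt_eq lab_eq.
apply: (@ep_tau0_relabel _ _ _ _ _ _ _ _ _ id); first by exists id.
- by move=> i v; rewrite -src_eq cast_ord_id.
- by move=> i v; rewrite -tgt_eq cast_ord_id.
by move=> i; rewrite -lab_eq cast_ord_id.
Qed.

End EndpointGraphs.

Section QuotientMaps.
Variables (K : fieldType) (A : algType K) (phi : A -> K).
Implicit Types (T : testgraph A) (f g h : nat -> nat).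

Definition quotient_map f (T1 T2 : testgraph A) : Prop :=
  [/\ tg_e T2 = [seq (f e.1.1, f e.1.2, e.2) | e <- tg_e T1],
      forall x, x < tg_n T1 -> f x < tg_n T2 &
      forall y, y < tg_n T2 -> exists2 x, x < tg_n T1 & f x = y].

Definition ker_sub N f h : Prop :=
  forall x y, x < N -> y < N -> f x = f y -> h x = h y.

Lemma quotient_map_comp f g (T1 T2 T3 : testgraph A) :
  quotient_map f T1 T2 -> quotient_map g T2 T3 -> quotient_map (g \o f) T1 T3.
Proof.
case=> edges_f ltn_f surj_f [edges_g ltn_g surj_g]; split.
- by rewrite edges_g edges_f -map_comp.
- by move=> x /ltn_f /ltn_g.
by move=> z /surj_g[y /surj_f[x ltx <-] <-]; exists x.
Qed.

Lemma quotient_map_quot T (P : {set {set vert_t T}}) :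
  partition P setT -> quotient_map (blk P) T (quot P).
Proof.
move=> partP; split=> // [x|y /(blk_surj partP)[x <-]]; first exact: blk_ltn.
by exists x.
Qed.

Lemma quotient_map_section f (T1 T2 : testgraph A) : quotient_map f T1 T2 ->
  exists g, forall y, y < tg_n T2 -> g y < tg_n T1 /\ f (g y) = y.
Proof.
case=> _ _ surj_f.
exists (fun y => if [pick x : 'I_(tg_n T1) | f x == y] is Some x then val x else 0%N).
move=> y lty; case: pickP => [x' /eqP <-|none]; first by rewrite ltn_ord.
by have [x ltx fx] := surj_f y lty; have := none (Ordinal ltx); rewrite /= fx eqxx.
Qed.

Lemma tau0_quotient_map_edges f (T1 T2 : testgraph A) : quotient_map f T1 T2 ->
  tau0 phi T2 = ep_tau0 phi (tg_n T2) (fun i : edge_t T1 => f (esrc i))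
                  (fun i => f (etgt i)) (@elab _ _ T1).
Proof.
case=> edges _ _; rewrite tau0E.
have e : size (tg_e T1) = size (tg_e T2) by rewrite edges size_map.
apply: (@ep_tau0_cast _ _ phi _ _ _ e) => i;
  by rewrite /esrc /etgt /elab /= edges (nth_map (0%N, 0%N, 0%R)).
Qed.

Lemma tau0_quotient_map f g (T1 T2 T3 : testgraph A) : tg_wf T1 ->
  quotient_map f T1 T2 -> quotient_map g T1 T3 ->
  (forall x y, x < tg_n T1 -> y < tg_n T1 -> (f x == f y) = (g x == g y)) ->
  tau0 phi T2 = tau0 phi T3.
Proof.
move=> wfT1 qf qg ker_fg.
rewrite (tau0_quotient_map_edges qf) (tau0_quotient_map_edges qg).
have [[_ ltn_f _] [_ ltn_g _]] := (qf, qg).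
have [f' f'K] := quotient_map_section qf; have [g' g'K] := quotient_map_section qg.
have lt_sigma (y : 'I_(tg_n T2)) : g (f' y) < tg_n T3.
  by apply: ltn_g; case: (f'K y (ltn_ord y)).
have lt_tau (z : 'I_(tg_n T3)) : f (g' z) < tg_n T2.
  by apply: ltn_f; case: (g'K z (ltn_ord z)).
pose sigma y := Ordinal (lt_sigma y); pose tau z := Ordinal (lt_tau z).
have sigma_bij : bijective sigma.
  exists tau => [y|z]; apply/val_inj/eqP => /=.
    have [ltw gw] := g'K _ (lt_sigma y); have [ltf fy] := f'K y (ltn_ord y).
    by rewrite -{2}fy ker_fg // gw.
  have [ltw fw] := f'K _ (lt_tau z); have [ltg gz] := g'K z (ltn_ord z).
  by rewrite -{2}gz -ker_fg // fw.
have /forallP wf := eqbLR (tg_wfE T1) wfT1.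
have relabel (ends : edge_t T1 -> nat) : (forall i, ends i < tg_n T1) ->
    forall i v, (g (ends i) == sigma v) = (f (ends i) == v).
  move=> lt_ends i v; have [ltf' f'v] := f'K v (ltn_ord v).
  by rewrite /= -ker_fg // f'v.
symmetry; apply: (@ep_tau0_relabel _ _ phi _ _ _ _ _ _ _ _ _ sigma) => //;
  by apply: relabel => i; case/andP: (wf i).
Qed.

Definition ker_coarser T f (P : {set {set vert_t T}}) :=
  [forall x : vert_t T, forall y : vert_t T, (f x == f y) ==> (pblock P x == pblock P y)].

Lemma ker_coarserP T f (P : {set {set vert_t T}}) : partition P setT ->
  ker_coarser f P <-> ker_sub (tg_n T) f (blk P).
Proof.
move=> partP; split=> [/forallP coarseP x y ltx lty fxy|kerP].
  apply/eqP; rewrite -[x]/(val (Ordinal ltx)) -[y]/(val (Ordinal lty)) eq_blk //.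
  by apply: (implyP (forallP (coarseP _) _)); rewrite /= fxy.
apply/forallP => x; apply/forallP => y; apply/implyP => /eqP fxy.
by rewrite -eq_blk // (kerP _ _ (ltn_ord x) (ltn_ord y) fxy).
Qed.

(* Pulling partitions back along f is a bijection onto the partitions of T1 coarser
   than the kernel of f; pushing forward along a section of f inverts it. *)
Lemma tau_quotient_map f T1 T2 : tg_wf T1 -> quotient_map f T1 T2 ->
  tau phi T2 = (\sum_(P : {set {set vert_t T1}} | partition P setT && ker_coarser f P)
                  tau0 phi (quot P))%R.
Proof.
move=> wfT1 qf; have [_ ltn_f _] := qf; have [f' f'K] := quotient_map_section qf.
pose fo (x : vert_t T1) : vert_t T2 := Ordinal (ltn_f _ (ltn_ord x)).
pose sec (y : vert_t T2) : vert_t T1 := Ordinal (proj1 (f'K _ (ltn_ord y))).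
have secK y : fo (sec y) = y by apply/val_inj; rewrite /= (proj2 (f'K _ (ltn_ord y))).
pose pull (Q : {set {set vert_t T2}}) := preim_partition (fun x => pblock Q (fo x)) setT.
pose push (P : {set {set vert_t T1}}) := preim_partition (fun y => pblock P (sec y)) setT.
have pushK Q : partition Q setT -> push (pull Q) = Q.
  move=> partQ; apply: partition_eq_pblock => //; first exact: preim_partitionP.
  by move=> y y'; rewrite !pblock_preim !secK.
have pullK P : partition P setT && ker_coarser f P -> pull (push P) = P.
  case/andP=> partP coarseP; apply: partition_eq_pblock => //; first exact: preim_partitionP.
  have secfoE x : pblock P (sec (fo x)) = pblock P x.
    apply/eqP; apply: (implyP (forallP (forallP coarseP _) _)).
    by rewrite -[f (sec (fo x))]/(val (fo (sec (fo x)))) secK.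
  by move=> x y; rewrite !pblock_preim !secfoE.
rewrite /tau (reindex_onto pull push pullK); apply: eq_big => [Q|Q partQ].
  apply/idP/idP => [partQ|/andP[_ /eqP <-]]; last exact: preim_partitionP.
  rewrite preim_partitionP pushK ?eqxx ?andbT //.
  apply/forallP => x; apply/forallP => y; apply/implyP => /eqP fxy.
  by rewrite pblock_preim (_ : fo x = fo y) //; apply: val_inj.
have partP : partition (pull Q) setT by exact: preim_partitionP.
apply: (tau0_quotient_map wfT1 (quotient_map_comp qf (quotient_map_quot partQ))
  (quotient_map_quot partP)) => x y ltx lty /=.
rewrite -[x]/(val (Ordinal ltx)) -[y]/(val (Ordinal lty)) eq_blk // pblock_preim.
exact: (eq_blk (fo (Ordinal ltx)) (fo (Ordinal lty)) partQ).
Qed.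

Lemma tau0_neq0_cactus T : tau0 phi T != 0%R -> is_cactus T.
Proof. by rewrite /tau0; case: ifP => [/andP[]|] //; rewrite eqxx. Qed.

Lemma tau_eq_quotient_maps f g (T1 T2 T3 : testgraph A) : tg_wf T1 ->
  quotient_map f T1 T2 -> quotient_map g T1 T3 -> ker_sub (tg_n T1) f g ->
  (forall P : {set {set vert_t T1}}, partition P setT -> is_cactus (quot P) ->
     ker_sub (tg_n T1) f (blk P) -> ker_sub (tg_n T1) g (blk P)) ->
  tau phi T2 = tau phi T3.
Proof.
move=> wfT1 qf qg ker_fg cactus_g.
rewrite (tau_quotient_map wfT1 qf) (tau_quotient_map wfT1 qg).
rewrite (bigID (fun P => ker_coarser g P)) /= [X in (_ + X)%R]big1 ?GRing.addr0.
  apply: eq_bigl => P; case partP: (partition P setT) => //=.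
  apply/andP/idP => [[] //|coarse_g]; split=> //.
  move/(ker_coarserP _ partP): coarse_g => kerP; apply/(ker_coarserP _ partP).
  by move=> x y ltx lty /(ker_fg _ _ ltx lty); apply: kerP.
move=> P /andP[/andP[partP /(ker_coarserP _ partP) coarse_f] coarse_g].
apply/eqP; apply: contraNT coarse_g => /tau0_neq0_cactus cactusP.
by apply/(ker_coarserP _ partP); apply: cactus_g.
Qed.

End QuotientMaps.

Section Cycles.
Variables (K : fieldType) (A : algType K) (T : testgraph A).
Implicit Types (S E C : {set edge_t T}) (u v w x y : vert_t T) (i e : edge_t T).

Definition joins i u w :=
  ((esrc i == u) && (etgt i == w)) || ((esrc i == w) && (etgt i == u)).
Definition touch i v := (esrc i == v) || (etgt i == v).
Definition nedges_at E v := #|[set i in E | touch i v]|.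

Lemma adjSP S u w : reflect (exists2 i, i \in S & joins i u w) (adjS S u w).
Proof. by apply: (iffP existsP) => [[i /andP[]]|[i iS j]]; [exists i | exists i; rewrite iS]. Qed.

Lemma joins_sym i u w : joins i u w = joins i w u.
Proof. exact: orbC. Qed.

Lemma touch_joins i u w v : joins i u w -> touch i v = (v == u) || (v == w).
Proof.
by rewrite /touch; case/orP=> /andP[/eqP-> /eqP->]; rewrite !(eq_sym v) // orbC.
Qed.

Lemma joins_loopless i u w : joins i u w -> u != w -> esrc i != etgt i.
Proof. by case/orP=> /andP[/eqP-> /eqP->] //; rewrite eq_sym. Qed.

Lemma adjS_sym S : symmetric (adjS S).
Proof. by move=> u w; apply/adjSP/adjSP => -[i iS j]; exists i; rewrite // joins_sym. Qed.

Lemma connect_adjS_sym S u w : connect (adjS S) u w = connect (adjS S) w u.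
Proof. exact/sym_connect_sym/adjS_sym. Qed.

Lemma connect_adjS_subset S S' : S \subset S' ->
  subrel (connect (adjS S)) (connect (adjS S')).
Proof.
move=> subSS'; apply: connect_sub => u w /adjSP[i iS j]; apply/connect1/adjSP.
by exists i; first exact: (subsetP subSS').
Qed.

Lemma nedges_at0 v : nedges_at set0 v = 0.
Proof. by apply/eqP; rewrite cards_eq0; apply/eqP/setP => i; rewrite !inE. Qed.

Lemma nedges_atU1 e E v : e \notin E -> nedges_at (e |: E) v = touch e v + nedges_at E v.
Proof.
move=> eE; rewrite /nedges_at; case: (boolP (touch e v)) => tev.
  rewrite (_ : [set i in e |: E | touch i v] = e |: [set i in E | touch i v]).
    by rewrite cardsU1 inE (negPf eE).
  by apply/setP => i; rewrite !inE; case: eqVneq => [->|].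
rewrite (_ : [set i in e |: E | touch i v] = [set i in E | touch i v]) //.
by apply/setP => i; rewrite !inE; case: eqVneq => [->|]; rewrite ?(negPf tev) ?andbF.
Qed.

Lemma touchedE E v : touched E v = (0 < nedges_at E v).
Proof.
apply/existsP/card_gt0P => [[i /andP[iE tiv]]|[i]]; first by exists i; rewrite inE iE.
by rewrite inE => /andP[iE tiv]; exists i; rewrite iE.
Qed.

Lemma degE E v : {in E, forall i, esrc i != etgt i} ->
  indeg E v + outdeg E v = nedges_at E v.
Proof.
move=> loopless; rewrite /indeg /outdeg -cardsUI.
rewrite (_ : _ :&: _ = set0) ?cards0 ?addn0.
  by apply: eq_card => i; rewrite !inE /touch; case: (i \in E); rewrite //= orbC.
apply/setP => i; rewrite !inE; case iE: (i \in E) => //=.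
by apply/negP => /andP[/eqP ti /eqP si]; have := loopless i iE; rewrite si ti eqxx.
Qed.

Definition path_edge S x y : {set edge_t T} :=
  if [pick i in S | joins i x y] is Some i then [set i] else set0.

Fixpoint path_edges S x (p : seq (vert_t T)) : {set edge_t T} :=
  if p is y :: p' then path_edge S x y :|: path_edges S y p' else set0.

Lemma path_edgeP S x y : adjS S x y ->
  exists i, [/\ path_edge S x y = [set i], i \in S & joins i x y].
Proof.
move=> /adjSP[i0 i0S j0]; rewrite /path_edge; case: pickP => [i /andP[iS j]|none].
  by exists i.
by have := none i0; rewrite /= i0S j0.
Qed.

Lemma path_edgesP S x p : uniq (x :: p) -> path (adjS S) x p ->
  [/\ path_edges S x p \subset S,
      {in path_edges S x p, forall i, esrc i != etgt i},
      forall v, nedges_at (path_edges S x p) v + (v == x) + (v == last x p)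
                = 2 * (v \in x :: p) &
      forall v, v \in x :: p -> connect (adjS (path_edges S x p)) x v].
Proof.
elim: p x => [|y p IHp] x /=.
  split=> [||v|v]; rewrite ?sub0set ?nedges_at0 ?inE //; first by move=> i; rewrite inE.
    by case: (v == x).
  by move/eqP->.
rewrite inE negb_or => /andP[/andP[xy xp] uniq_p] /andP[adj_xy path_p].
have [subS loopless count conn] := IHp y uniq_p path_p.
have [e [-> eS je]] := path_edgeP adj_xy.
have x_notin : x \notin y :: p by rewrite inE negb_or xy.
have count_x : nedges_at (path_edges S y p) x = 0.
  have := count x; rewrite (negPf x_notin) (negPf xy).
  by case: (x == last y p); rewrite ?addn1 ?addn0.
have e_notin : e \notin path_edges S y p.
  apply/negP => ep; move/eqP: count_x; apply/negP; rewrite -lt0n -touchedE.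
  by apply/existsP; exists e; rewrite ep -/(touch e x) (touch_joins _ je) eqxx.
split.
- by rewrite subUset sub1set eS subS.
- move=> i; rewrite !inE => /orP[/eqP->|]; last exact: loopless.
  exact: joins_loopless je xy.
- move=> v; rewrite nedges_atU1 // (touch_joins _ je) in_cons.
  case: (eqVneq v x) => [->|vx] /=; last by rewrite addn0 [(v == y) + _]addnC count.
  have x_last : (x == last y p) = false.
    by apply: contraNF x_notin => /eqP->; rewrite mem_last.
  by rewrite count_x x_last.
move=> v; rewrite inE => /orP[/eqP->|vp]; first exact: connect0.
apply: (@connect_trans _ _ y); first by apply/connect1/adjSP; exists e; rewrite ?inE ?eqxx.
exact: connect_adjS_subset (subsetUr _ _) _ _ (conn v vp).
Qed.

Lemma cycle_through_edge S e x y : e \notin S -> joins e x y -> x != y ->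
  connect (adjS S) x y -> exists C, [/\ simple_cycle C, e \in C & C \subset e |: S].
Proof.
move=> eS je xy /connectP[p0 path0 y_last].
case: (shortenP path0) y_last => p path_p uniq_p _ {p0 path0} y_last.
have [subS loopless count conn] := path_edgesP uniq_p path_p.
have e_notin : e \notin path_edges S x p by apply: contra eS; apply/subsetP.
have countC v : nedges_at (e |: path_edges S x p) v = 2 * (v \in x :: p).
  rewrite nedges_atU1 // (touch_joins _ je) -count -y_last.
  have [->|_] := eqVneq v x; last by rewrite addn0 addnC.
  by rewrite (negPf xy) /= addn0 addnC.
have in_path v : touched (e |: path_edges S x p) v -> v \in x :: p.
  by rewrite touchedE countC; case: (v \in x :: p).
exists (e |: path_edges S x p); split; last by rewrite setUS.
- apply/and3P; split; first by apply/set0Pn; exists e; rewrite setU11.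
    apply/forallP => v; apply/implyP => /in_path vp; rewrite degE ?countC ?vp //.
    by move=> i; rewrite !inE => /orP[/eqP->|]; [apply: joins_loopless je xy | apply: loopless].
  apply/forallP => v; apply/forallP => w; apply/implyP => /andP[/in_path vp /in_path wp].
  have conn_sub := connect_adjS_subset (subsetUr [set e] (path_edges S x p)).
  by apply: connect_trans (conn_sub _ _ (conn w wp)); rewrite connect_adjS_sym conn_sub ?conn.
- exact: setU11.
Qed.

Lemma simple_cycle_other_edge C e a : simple_cycle C -> e \in C -> touch e a ->
  esrc e != etgt e -> exists2 g, g \in C & (g != e) && touch g a.
Proof.
move=> /and3P[_ /forallP deg2 _] eC tea loopless_e.
apply/exists_inP; apply: contraLR isT => /exists_inPn only_e.
have sub_e : [set i in C | etgt i == a] :|: [set i in C | esrc i == a] \subset [set e].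
  apply/subsetP => i; rewrite !inE => ti.
  have iC : i \in C by case/orP: ti => /andP[].
  apply: contraR (only_e i iC) => ie.
  by rewrite ie /touch orbC; case/orP: ti => /andP[_ ->]; rewrite ?orbT.
have no_loop : [set i in C | etgt i == a] :&: [set i in C | esrc i == a] = set0.
  apply/setP => i; rewrite !inE; apply/negP => /andP[/andP[iC /eqP ti] /andP[_ /eqP si]].
  have /set1P ie : i \in [set e] by apply: (subsetP sub_e); rewrite !inE iC ti eqxx.
  by move: loopless_e; rewrite -ie si ti eqxx.
have := implyP (deg2 a); rewrite /indeg /outdeg -cardsUI no_loop cards0 addn0.
have touched_a : touched C a by apply/existsP; exists e; rewrite eC.
by move=> /(_ touched_a) /eqP deg; have := subset_leq_card sub_e; rewrite deg cards1.
Qed.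

Lemma cactus_pad_unique C C' e : is_cactus T -> simple_cycle C -> simple_cycle C' ->
  e \in C -> e \in C' -> C = C'.
Proof.
move=> /andP[_ /forallP/(_ e)/cards1P[D pads_e]] scC scC' eC eC'.
have pad_e X : simple_cycle X -> e \in X -> X = D.
  by move=> scX eX; apply/set1P; rewrite -pads_e inE scX eX.
by rewrite (pad_e C scC eC) (pad_e C' scC' eC').
Qed.

(* Cut the first edge e1 of a shortest path from a to b and the other edge g at a of
   the pad of e1: a path from a to the next vertex avoiding both would close, with e1,
   a second pad through e1. *)
Lemma cactus_cut2 a b : is_cactus T -> a != b ->
  exists S, #|S| <= 2 /\ ~~ connect (adjS (~: S)) a b.
Proof.
move=> cactusT ab; have /andP[/andP[_ /forallP connT] /forallP pads1] := cactusT.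
have /connectP[p0 path0 b_last] := forallP (connT a) b.
case: (shortenP path0) b_last => p path_p uniq_p _ {p0 path0} b_last.
case: p path_p uniq_p b_last => [_ _ ba|v1 p]; first by rewrite ba eqxx in ab.
rewrite /= inE negb_or => /andP[adj1 path1] /andP[/andP[av1 ap] _] b_last.
have /adjSP[e1 _ je1] := adj1.
have [C scC e1C] : exists2 C, simple_cycle C & e1 \in C.
  have /cards1P[C padsC] := pads1 e1.
  have : C \in [set S | simple_cycle S & e1 \in S] by rewrite padsC set11.
  by rewrite inE => /andP[]; exists C.
have tea : touch e1 a by rewrite (touch_joins _ je1) eqxx.
have [g gC /andP[ge1 tga]] := simple_cycle_other_edge scC e1C tea (joins_loopless je1 av1).
exists [set e1; g]; split; first by rewrite cards2; case: (e1 != g).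
apply/negP => conn_ab.
have avoid_a u w : u != a -> w != a -> adjS setT u w -> adjS (~: [set e1; g]) u w.
  move=> ua wa /adjSP[i _ ji]; apply/adjSP; exists i => //.
  have tia : touch i a = false by rewrite (touch_joins _ ji) !(eq_sym a) (negPf ua) (negPf wa).
  by rewrite !inE negb_or; apply/andP; split; apply: contraFN tia => /eqP->.
have conn_v1b : connect (adjS (~: [set e1; g])) v1 b.
  apply/connectP; exists p => //; apply: (sub_in_path (P := predC1 a) avoid_a) path1.
  by rewrite /= eq_sym av1; apply/allP => z zp; apply: contraNneq ap => <-.
have conn_av1 : connect (adjS (~: [set e1; g])) a v1.
  by apply: connect_trans conn_ab _; rewrite connect_adjS_sym.
have e1_notin : e1 \notin ~: [set e1; g] by rewrite !inE eqxx.
have [C' [scC' e1C' subC']] := cycle_through_edge e1_notin je1 av1 conn_av1.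
move: gC; rewrite (cactus_pad_unique cactusT scC scC' e1C e1C') => /(subsetP subC').
by rewrite !inE (negPf ge1) eqxx orbT.
Qed.

End Cycles.

Lemma bigmin_leq (I : finType) (P : pred I) (F : I -> nat) x0 j : P j ->
  \big[minn/x0]_(i | P i) F i <= F j.
Proof.
move=> Pj; rewrite unlock; elim: (index_enum I) (mem_index_enum j) => //= i r IHr.
rewrite inE => /orP[/eqP<-|jr]; first by rewrite Pj geq_minl.
by case: (P i); [apply: leq_trans (geq_minr _ _) (IHr jr) | apply: IHr].
Qed.

Section ThreeEdgeConnectivity.
Variables (K : fieldType) (A : algType K).

Definition conn3 (T : testgraph A) (v w : vert_t T) :=
  [forall S : {set edge_t T}, (#|S| <= 2) ==> connect (adjS (~: S)) v w].

Lemma conn3_equiv (T : testgraph A) : equivalence_rel (@conn3 T).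
Proof.
move=> x y z; split; first by apply/forallP => S; apply/implyP => _; apply: connect0.
move=> /forallP conn_xy; apply/idP/idP => /forallP conn_z; apply/forallP => S;
  apply/implyP => small_S; have := implyP (conn_xy S) small_S.
  by rewrite connect_adjS_sym => /connect_trans; apply; apply: (implyP (conn_z S)).
by move/connect_trans; apply; apply: (implyP (conn_z S)).
Qed.

Lemma conn3_cactus_eq (T : testgraph A) (v w : vert_t T) : is_cactus T -> conn3 v w -> v = w.
Proof.
move=> cactusT /forallP conn_vw; apply/eqP; apply: contraT => vw.
have [S [small_S /negP]] := cactus_cut2 cactusT vw.
by case; apply: (implyP (conn_vw S)).
Qed.

Section Lift.
Variables (T T' : testgraph A) (f : nat -> nat) (emb : edge_t T -> edge_t T').
Hypotheses (emb_inj : injective emb)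
  (src_emb : forall i, esrc (emb i) = f (esrc i))
  (tgt_emb : forall i, etgt (emb i) = f (etgt i)).

Lemma connect_lift (S' : {set edge_t T'}) (v w : vert_t T) (v' w' : vert_t T') :
  (forall x, x < tg_n T -> f x < tg_n T') -> val v' = f v -> val w' = f w ->
  connect (adjS (~: [set i | emb i \in S'])) v w -> connect (adjS (~: S')) v' w'.
Proof.
move=> ltn_f v'E w'E; pose ho (x : vert_t T) : vert_t T' := Ordinal (ltn_f _ (ltn_ord x)).
have -> : v' = ho v by apply: val_inj.
have -> : w' = ho w by apply: val_inj.
apply: homo_connect => x y /adjSP[i iS ji]; apply/adjSP; exists (emb i).
  by move: iS; rewrite !inE.
by rewrite /joins src_emb tgt_emb; case/orP: ji => /andP[/eqP-> /eqP->]; rewrite !eqxx ?orbT.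
Qed.

Lemma conn3_lift (v w : vert_t T) (v' w' : vert_t T') :
  (forall x, x < tg_n T -> f x < tg_n T') -> val v' = f v -> val w' = f w ->
  conn3 v w -> conn3 v' w'.
Proof.
move=> ltn_f v'E w'E /forallP conn_vw; apply/forallP => S'; apply/implyP => small_S'.
apply: connect_lift ltn_f v'E w'E _; apply: (implyP (conn_vw _)).
apply: leq_trans small_S'; rewrite -(card_imset _ emb_inj); apply: subset_leq_card.
by apply/subsetP => _ /imsetP[i + ->]; rewrite inE.
Qed.

End Lift.

Section Quotient.
Variables (T : testgraph A) (P : {set {set vert_t T}}).
Hypothesis partP : partition P setT.

Definition quot_edge (i : edge_t T) : edge_t (quot P) := cast_ord (esym (size_map _ _)) i.

Lemma quot_edge_inj : injective quot_edge.
Proof. by move=> i j /(congr1 val) /= /val_inj. Qed.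

Lemma esrc_quot_edge i : esrc (quot_edge i) = blk P (esrc i).
Proof. by rewrite /esrc /= (nth_map (0%N, 0%N, 0%R)). Qed.

Lemma etgt_quot_edge i : etgt (quot_edge i) = blk P (etgt i).
Proof. by rewrite /etgt /= (nth_map (0%N, 0%N, 0%R)). Qed.

Lemma adjS_quot (S : {set edge_t T}) (z y : vert_t (quot P)) : tg_wf T ->
  adjS (~: (quot_edge @: S)) z y ->
  exists x0 y0 : vert_t T, [/\ blk P x0 = z, blk P y0 = y & adjS (~: S) x0 y0].
Proof.
move=> wfT /adjSP[j]; have [i ->] : exists i, j = quot_edge i.
  by exists (cast_ord (size_map _ _) j); apply: val_inj.
rewrite inE (mem_imset _ _ quot_edge_inj) /joins esrc_quot_edge etgt_quot_edge => iS.
have /andP[lt_src lt_tgt] := forallP (eqbLR (tg_wfE T) wfT) i.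
pose x0 : vert_t T := Ordinal lt_src; pose y0 : vert_t T := Ordinal lt_tgt.
have adj0 : adjS (~: S) x0 y0 by apply/adjSP; exists i; rewrite ?inE // /joins !eqxx.
case/orP=> /andP[/eqP src_z /eqP tgt_y]; first by exists x0, y0.
by exists y0, x0; rewrite adjS_sym.
Qed.

Lemma quot_vert (v : vert_t T) : exists v' : vert_t (quot P), val v' = blk P v.
Proof. by exists (Ordinal (blk_ltn partP (ltn_ord v))). Qed.

Lemma conn3_quot_cactus (v w : vert_t T) : is_cactus (quot P) -> conn3 v w -> blk P v = blk P w.
Proof.
move=> cactusQ conn_vw; have [[v' v'E] [w' w'E]] := (quot_vert v, quot_vert w).
rewrite -v'E -w'E; congr val; apply: conn3_cactus_eq cactusQ _.
apply: (conn3_lift quot_edge_inj esrc_quot_edge etgt_quot_edge _ v'E w'E conn_vw).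
by move=> x; apply: blk_ltn.
Qed.

End Quotient.
Arguments quot_edge {T} P i.
Arguments quot_edge_inj {T} P [x1 x2] _.

Section Conn3Quotient.
Variable T : testgraph A.

Definition conn3_partition := equivalence_partition (@conn3 T) setT.

Lemma conn3_partitionP : partition conn3_partition setT.
Proof. by apply: equivalence_partitionP => x y z _ _ _; apply: conn3_equiv. Qed.

Lemma eq_blk_conn3 (x y : vert_t T) :
  (blk conn3_partition x == blk conn3_partition y) = conn3 x y.
Proof.
rewrite eq_blk ?conn3_partitionP // eq_pblockT ?conn3_partitionP //.
by rewrite pblock_equivalence_partition ?inE // => u v z _ _ _; apply: conn3_equiv.
Qed.

Local Notation P := conn3_partition.

Lemma connect_conn3_quot (S : {set edge_t T}) (v w : vert_t T) (v' w' : vert_t (quot P)) :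
  tg_wf T -> #|S| <= 2 -> val v' = blk P v -> val w' = blk P w ->
  connect (adjS (~: (quot_edge P @: S))) v' w' -> connect (adjS (~: S)) v w.
Proof.
move=> wfT small_S v'E w'E /connectP[p path_p w'_last].
have same_blk (x y : vert_t T) : blk P x = blk P y -> connect (adjS (~: S)) x y.
  by move/eqP; rewrite eq_blk_conn3 => /forallP/(_ S)/implyP; apply.
suff reach z : path (adjS (~: (quot_edge P @: S))) z p ->
    (forall x : vert_t T, blk P x = z -> connect (adjS (~: S)) v x) ->
    forall x : vert_t T, blk P x = last z p -> connect (adjS (~: S)) v x.
  by apply: (reach v' path_p); [move=> x xE; apply: same_blk; rewrite -v'E xE | rewrite -w'_last].
elim: p z {path_p w'_last} => [|y p IHp] z /= => [_ reach_z //|/andP[zy path_p] reach_z].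
apply: IHp path_p _ => x xE; have [x0 [y0 [x0E y0E adj0]]] := adjS_quot wfT zy.
apply: connect_trans (connect_trans (reach_z _ x0E) (connect1 adj0)) (same_blk _ _ _).
by rewrite y0E xE.
Qed.

Lemma quasi_cactus_quot_conn3 : tg_wf T -> connected T -> quasi_cactus (quot P).
Proof.
move=> wfT /forallP connT; apply/forallP => v'; apply/forallP => w'; apply/implyP => v'w'.
have [v vE] := blk_surj conn3_partitionP (ltn_ord v').
have [w wE] := blk_surj conn3_partitionP (ltn_ord w').
have /forallPn[S] : ~~ conn3 v w.
  by rewrite -eq_blk_conn3 vE wE; apply: contra v'w' => /eqP/val_inj->.
rewrite negb_imply => /andP[small_S cut_S].
have cut_S' : ~~ connect (adjS (~: (quot_edge P @: S))) v' w'.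
  exact: contra (connect_conn3_quot wfT small_S (esym vE) (esym wE)) cut_S.
have conn_v'w' : connect (adjS (~: set0)) v' w'.
  apply: (connect_lift (esrc_quot_edge P) (etgt_quot_edge P)
    (fun x => blk_ltn conn3_partitionP) (esym vE) (esym wE)).
  rewrite (_ : ~: _ = [set: edge_t T]); first exact: (forallP (connT v)).
  by apply/setP => i; rewrite !inE.
have upper : edge_conn v' w' <= 2.
  apply: leq_trans (@bigmin_leq _ (fun S => ~~ connect (adjS (~: S)) v' w') _ _ _ cut_S') _.
  by rewrite card_imset //; apply: quot_edge_inj.
have lower : 0 < edge_conn v' w'.
  apply: (big_ind (fun k => 0 < k)) => // [k l|S0 cut_S0]; first by rewrite leq_min => ->.
  by rewrite card_gt0; apply: contraNneq cut_S0 => ->.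
by rewrite !inE; case: (edge_conn v' w') upper lower => [|[|[|]]].
Qed.

End Conn3Quotient.
End ThreeEdgeConnectivity.

Section Products.
Variables (K : fieldType) (A : algType K).

Section Gluing.
Variables (T : testgraph A) (a b : nat).
Hypotheses (lt_a : a < tg_n T) (lt_b : b < tg_n T).

Lemma eq_blk_glue x y : x < tg_n T -> y < tg_n T ->
  (blk (glue_part T a b) x == blk (glue_part T a b) y) =
  ((if x == b then a else x) == (if y == b then a else y)).
Proof.
move=> ltx lty; rewrite -[x]/(val (Ordinal ltx)) -[y]/(val (Ordinal lty)) eq_blk.
  by rewrite pblock_preim.
exact: preim_partitionP.
Qed.

Lemma blk_glue : blk (glue_part T a b) a = blk (glue_part T a b) b.
Proof. by apply/eqP; rewrite eq_blk_glue // eqxx; case: ifP. Qed.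

Lemma blk_glue_cases x y : x < tg_n T -> y < tg_n T ->
  blk (glue_part T a b) x = blk (glue_part T a b) y ->
  [\/ x = y, x = a /\ y = b | x = b /\ y = a].
Proof.
move=> ltx lty /eqP; rewrite eq_blk_glue //.
case: (eqVneq x b) => [->|_]; case: (eqVneq y b) => [->|_] /eqP.
- by constructor 1.
- by move=> <-; constructor 3.
- by move=> ->; constructor 2.
- by move=> ->; constructor 1.
Qed.

End Gluing.

Lemma ker_sub_glue N (T : testgraph A) f h a b a' b' :
  (forall x, x < N -> f x < tg_n T) -> ker_sub N f h ->
  a < N -> b < N -> f a = a' -> f b = b' -> h a = h b ->
  ker_sub N (blk (glue_part T a' b') \o f) h.
Proof.
move=> ltn_f ker_fh lt_a lt_b <- <- hab x y ltx lty /=.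
case/(blk_glue_cases (ltn_f _ ltx) (ltn_f _ lty)) => [|[fxa fyb]|[fxb fya]].
- exact: ker_fh.
- by rewrite (ker_fh _ _ ltx lt_a fxa) hab (ker_fh _ _ lt_b lty (esym fyb)).
by rewrite (ker_fh _ _ ltx lt_b fxb) -hab (ker_fh _ _ lt_a lty (esym fya)).
Qed.

Section Product.
Variables t u : gmono A.
Local Notation n1 := (tg_n (gm_g t)).

(* [gm_mul t u] is [quot mul_part] and [delta (gm_mul t u)] is [quot delta_mul_part]. *)
Definition gm_sum : testgraph A :=
  TG (n1 + tg_n (gm_g u))
     (tg_e (gm_g t) ++ [seq (n1 + e.1.1, n1 + e.1.2, e.2)%N | e <- tg_e (gm_g u)]).

Definition mul_part := glue_part gm_sum (gm_in t) (n1 + gm_out u).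
Definition delta_mul_part :=
  glue_part (quot mul_part) (blk mul_part (n1 + gm_in u)) (blk mul_part (gm_out t)).
Definition delta_mul_map := blk delta_mul_part \o blk mul_part.

Lemma quotient_map_delta_mul :
  quotient_map delta_mul_map gm_sum (delta (gm_mul t u)).
Proof. by apply: quotient_map_comp; apply: quotient_map_quot; apply: preim_partitionP. Qed.

Lemma tg_wf_sum : tg_wf (gm_g t) -> tg_wf (gm_g u) -> tg_wf gm_sum.
Proof.
move=> wf_t wf_u; rewrite /tg_wf all_cat; apply/andP; split.
  by apply/allP => e /(allP wf_t) /andP[lt1 lt2]; rewrite !ltn_addr.
by apply/allP => _ /mapP[e /(allP wf_u) /andP[lt1 lt2] ->]; rewrite /= !ltn_add2l lt1 lt2.
Qed.

Lemma conn3_sum_l (x y : vert_t (gm_g t)) (x' y' : vert_t gm_sum) :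
  val x' = val x -> val y' = val y -> conn3 x y -> conn3 x' y'.
Proof.
have le_edges : size (tg_e (gm_g t)) <= size (tg_e gm_sum).
  by rewrite size_cat leq_addr.
have ends i : nth (0%N, 0%N, 0%R) (tg_e gm_sum) (widen_ord le_edges i) =
              nth (0%N, 0%N, 0%R) (tg_e (gm_g t)) i by rewrite /= nth_cat ltn_ord.
apply: (@conn3_lift _ _ _ _ id (widen_ord le_edges)) => //.
- by move=> i j /(congr1 val) /= /val_inj.
- by move=> i; rewrite /esrc ends.
- by move=> i; rewrite /etgt ends.
by move=> z /= ltz; apply: ltn_addr.
Qed.

Hypotheses (lt_in_t : gm_in t < n1) (lt_out_t : gm_out t < n1)
  (lt_in_u : gm_in u < tg_n (gm_g u)) (lt_out_u : gm_out u < tg_n (gm_g u)).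

Lemma delta_mul_map_in_t_out_u : delta_mul_map (gm_in t) = delta_mul_map (n1 + gm_out u).
Proof.
apply: (congr1 (blk delta_mul_part)); apply: blk_glue; last by rewrite /= ltn_add2l.
exact: ltn_addr.
Qed.

Lemma delta_mul_map_in_u_out_t : delta_mul_map (n1 + gm_in u) = delta_mul_map (gm_out t).
Proof.
have part1 : partition mul_part setT by apply: preim_partitionP.
apply: blk_glue; apply: blk_ltn part1 _; first by rewrite /= ltn_add2l.
exact: ltn_addr.
Qed.

Lemma ker_sub_delta_mul_map N k h a b c d :
  (forall x, x < N -> k x < tg_n gm_sum) -> ker_sub N k h ->
  a < N -> b < N -> c < N -> d < N ->
  k a = gm_in t -> k b = n1 + gm_out u -> k c = n1 + gm_in u -> k d = gm_out t ->
  h a = h b -> h c = h d -> ker_sub N (delta_mul_map \o k) h.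
Proof.
move=> ltn_k ker_k lt_a lt_b lt_c lt_d ka kb kc kd hab hcd.
have ltn_k1 x : x < N -> (blk mul_part \o k) x < tg_n (quot mul_part).
  by move=> ltx; apply: blk_ltn (ltn_k _ ltx); apply: preim_partitionP.
apply: (ker_sub_glue ltn_k1 _ lt_c lt_d _ _ hcd); rewrite /= ?kc ?kd //.
exact: ker_sub_glue ltn_k ker_k lt_a lt_b ka kb hab.
Qed.

End Product.

Definition sum_map n1 n1' f x := if x < n1 then f x else n1' + (x - n1).

Lemma ker_sub_sum n1 n1' n2 f h : (forall x, x < n1 -> f x < n1') ->
  ker_sub n1 f h -> ker_sub (n1 + n2) (sum_map n1 n1' f) h.
Proof.
move=> ltn_f ker_fh x y ltx lty; rewrite /sum_map.
case: ifP => lt1x; case: ifP => lt1y; first exact: ker_fh.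
- by move=> fx; have := ltn_f _ lt1x; rewrite fx ltnNge leq_addr.
- by move=> fy; have := ltn_f _ lt1y; rewrite -fy ltnNge leq_addr.
move=> /eqP; rewrite eqn_add2l => /eqP eq_xy.
by move/negbT: lt1x => lt1x; move/negbT: lt1y => lt1y; have -> : x = y by lia.
Qed.
End Products.

Section Substitution.
Variables (K : fieldType) (A : algType K) (phi : A -> K).
Variables (t t' u : gmono A) (f : nat -> nat).
Local Notation n1 := (tg_n (gm_g t)).
Local Notation n1' := (tg_n (gm_g t')).
Local Notation k := (sum_map n1 n1' f).

Lemma quotient_map_sum : tg_wf (gm_g t) -> quotient_map f (gm_g t) (gm_g t') ->
  quotient_map k (gm_sum t u) (gm_sum t' u).
Proof.
move=> wf_t [edges ltn_f surj_f]; have kR x : k (n1 + x) = n1' + x.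
  by rewrite /sum_map ltnNge leq_addr addKn.
split=> [||y].
- rewrite /= edges map_cat -map_comp; congr (_ ++ _); last by apply: eq_map => e /=; rewrite !kR.
  by apply/eq_in_map => e /(allP wf_t) /andP[lt1 lt2] /=; rewrite /sum_map lt1 lt2.
- move=> x; rewrite /= /sum_map; case: ifP => [/ltn_f /ltn_addr //|/negbT]; lia.
rewrite /= => lty; case: (ltnP y n1') => [/surj_f[x ltx <-]|le_n1'y].
  by exists x; rewrite ?ltn_addr // /sum_map ltx.
by exists (n1 + (y - n1')); rewrite ?kR ?subnKC // ltn_add2l ltn_subLR.
Qed.

Hypotheses (wf_t : gm_wf t) (wf_u : gm_wf u) (qf : quotient_map f (gm_g t) (gm_g t'))
  (f_in : f (gm_in t) = gm_in t') (f_out : f (gm_out t) = gm_out t').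

Hypothesis cactus_merges : forall P : {set {set vert_t (gm_sum t u)}},
  partition P setT -> is_cactus (quot P) -> ker_sub n1 f (blk P).

Lemma psi_mul_quotient_map : psi phi (gm_mul t' u) = psi phi (gm_mul t u).
Proof.
have /and4P[wf_gt lt_in_t lt_out_t _] := wf_t.
have /and4P[wf_gu lt_in_u lt_out_u _] := wf_u.
have [_ ltn_f _] := qf; have qk := quotient_map_sum wf_gt qf; have [_ ltn_k _] := qk.
have lt_in_t' : gm_in t' < n1' by rewrite -f_in ltn_f.
have lt_out_t' : gm_out t' < n1' by rewrite -f_out ltn_f.
have kL x : x < n1 -> k x = f x by rewrite /sum_map => ->.
have kR x : k (n1 + x) = n1' + x by rewrite /sum_map ltnNge leq_addr addKn.
have [lt_in_tN lt_out_tN] : gm_in t < n1 + tg_n (gm_g u) /\ gm_out t < n1 + tg_n (gm_g u).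
  by split; apply: ltn_addr.
have [lt_in_uN lt_out_uN] : n1 + gm_in u < n1 + tg_n (gm_g u) /\
                              n1 + gm_out u < n1 + tg_n (gm_g u) by rewrite !ltn_add2l.
symmetry; rewrite /psi.
apply: (tau_eq_quotient_maps phi (tg_wf_sum wf_gt wf_gu) (quotient_map_delta_mul t u)
         (quotient_map_comp qk (quotient_map_delta_mul t' u))).
  apply: (@ker_sub_delta_mul_map _ _ t u _ id _
            (gm_in t) (n1 + gm_out u) (n1 + gm_in u) (gm_out t)) => // [x y _ _ -> //||].
  - by rewrite /= kR kL // f_in delta_mul_map_in_t_out_u.
  by rewrite /= kR kL // f_out delta_mul_map_in_u_out_t.
move=> P partP cactusP ker1.
apply: (@ker_sub_delta_mul_map _ _ t' u _ k _
          (gm_in t) (n1 + gm_out u) (n1 + gm_in u) (gm_out t)) => //.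
- exact: ker_sub_sum ltn_f (cactus_merges partP cactusP).
- by rewrite kL.
- by rewrite kL.
- by apply: ker1 => //; rewrite delta_mul_map_in_t_out_u.
by apply: ker1 => //; rewrite delta_mul_map_in_u_out_t.
Qed.

End Substitution.

Lemma ker_sub_conn3_partition (K : fieldType) (A : algType K) (t u : gmono A)
    (Q : {set {set vert_t (gm_sum t u)}}) :
  partition Q setT -> is_cactus (quot Q) ->
  ker_sub (tg_n (gm_g t)) (blk (conn3_partition (gm_g t))) (blk Q).
Proof.
move=> partQ cactusQ x y ltx lty /eqP.
rewrite -[x]/(val (Ordinal ltx)) -[y]/(val (Ordinal lty)) eq_blk_conn3 => conn_xy.
have lt_sum z : z < tg_n (gm_g t) -> z < tg_n (gm_sum t u) by apply: ltn_addr.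
apply: (conn3_quot_cactus partQ cactusQ (v := Ordinal (lt_sum _ ltx))
  (w := Ordinal (lt_sum _ lty))).
exact: conn3_sum_l conn_xy.
Qed.

Unset Implicit Arguments. Set Strict Implicit. Set Printing Implicit Defensive.
Import GRing.Theory.
Local Open Scope ring_scope.

Theorem corollary2p9 (A : algType complexC) (phi : A -> complexC)
  (phi_lin : forall (c : complexC) (x y : A), phi (c *: x + y) = c * phi x + phi y)
  (phi_unit : phi 1 = 1)
  (phi_trace : forall x y : A, phi (x * y) = phi (y * x))
  (t : gmono A) (ht : gm_wf t) :
  exists P : {set {set vert_t (gm_g t)}},
    [/\ partition P [set: vert_t (gm_g t)],
        quasi_cactus (gm_g (gm_quot t P))
      & eq_mod_psi phi (gm_quot t P) t].
Proof.
have /and4P[wf_t _ _ conn_t] := ht.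
have partP := conn3_partitionP (gm_g t).
exists (conn3_partition (gm_g t)); split=> //; first exact: quasi_cactus_quot_conn3.
move=> u wf_u; apply: (@psi_mul_quotient_map _ _ phi t (gm_quot t _) u _ ht wf_u
  (quotient_map_quot partP)) => //.
exact: ker_sub_conn3_partition.
Qed.
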